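(* Let $n\ge3$. An oriented cycle $\overrightarrow{C_n}$ is $\{1\}$-antimagic if and only if it is unidirectional or $\Theta$-oriented.
   Context: An oriented graph is a simple graph each of whose edges is given one direction (an arc $(u,v)$ goes from $u$ to $v$). For vertices $u,v$, $d(u,v)$ is the length of a shortest directed path from $u$ to $v$ ($d(u,u)=0$, $\infty$ if no path). For a set $D$ of nonnegative integers, $N_D(v)=\{y : d(v,y)\in D\}$; for a bijection $f:V\to\{1,\dots,|V|\}$, $\omega_D(v)=\sum_{x\in N_D(v)}f(x)$ (empty sum $0$); $f$ is $D$-antimagic if distinct vertices have distinct $D$-weights, and the graph is $D$-antimagic if such an $f$ exists. A source is a vertex of in-degree $0$, a sink a vertex of out-degree $0$. An oriented cycle $\overrightarrow{C_n}$ is an orientation of the cycle on $v_1,\dots,v_n$. It is unidirectional if (up to relabeling) its arcs are $(v_i,v_{i+1})$, $1\le i\le n-1$, and $(v_n,v_1)$. It is $\Theta$-oriented if it has exactly one source and exactly one sink and these two vertices are adjacent; up to relabeling its arcs are $(v_i,v_{i+1})$, $1\le i\le n-1$, and $(v_1,v_n)$. *)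

From mathcomp Require Import all_boot all_fingroup.
Set Implicit Arguments. Unset Strict Implicit. Unset Printing Implicit Defensive.

Section Digraph.
Variables (T : finType) (e : rel T).

Definition walk_len (u v : T) (k : nat) : bool :=
  [exists p : k.-tuple T, path e u p && (last u p == v)].

Definition dist_eq (u v : T) (k : nat) : bool :=
  walk_len u v k && [forall j : 'I_k, ~~ walk_len u v j].

(* N_D(v) = { y : d(v,y) \in D }. Finite distances are < #|T|, and
   d = infinity is never in D (D is a set of nonnegative integers). *)
Definition ND (D : pred nat) (v : T) : {set T} :=
  [set y | [exists k : 'I_#|T|, D k && dist_eq v y k]].

Definition Dweight (D : pred nat) (f : T -> nat) (v : T) : nat :=
  \sum_(x in ND D v) f x.

Definition vlabeling (f : T -> nat) : Prop :=
  injective f /\ forall x, 0 < f x <= #|T|.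

Definition D_antimagic_labeling (D : pred nat) (f : T -> nat) : Prop :=
  vlabeling f /\ injective (Dweight D f).

Definition D_antimagic (D : pred nat) : Prop :=
  exists f : T -> nat, D_antimagic_labeling D f.

Definition is_source (v : T) : bool := [forall u, ~~ e u v].
Definition is_sink (v : T) : bool := [forall u, ~~ e v u].

End Digraph.

(* Oriented cycle on vertices 'I_n (v_{i+1} <-> i), given by an orientation
   [o : 'I_n -> bool] of the edge {i, i+1 mod n}:
   o i = true means arc (i, i+1 mod n), o i = false means arc (i+1 mod n, i). *)
Definition ocycle_arc (n : nat) (o : 'I_n -> bool) : rel 'I_n :=
  fun i j => ((j == (i.+1 %% n) :> nat) && o i)
          || ((i == (j.+1 %% n) :> nat) && ~~ o j).

Definition std_unidir_arc (n : nat) : rel 'I_n :=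
  fun i j => (j == (i.+1 %% n) :> nat).

Definition unidirectional (n : nat) (e : rel 'I_n) : Prop :=
  exists s : {perm 'I_n}, forall i j, e (s i) (s j) = std_unidir_arc i j.

Definition theta_oriented (T : finType) (e : rel T) : Prop :=
  #|[set v | is_source e v]| = 1 /\ #|[set v | is_sink e v]| = 1 /\
  exists a b, [/\ is_source e a, is_sink e b & (e a b || e b a)].

From mathcomp Require Import all_boot all_fingroup zify.
Set Implicit Arguments. Unset Strict Implicit. Unset Printing Implicit Defensive.

(* For n >= 3 the {1}-neighbourhood of a vertex is its out-neighbourhood, so a
   sink weighs 0, a source weighs the labels of both its neighbours, and any
   other vertex weighs the label of its unique out-neighbour.  Two sinks would
   therefore collide; as sources and sinks alternate around the cycle, an
   antimagic orientation has none of either (it is unidirectional) or exactly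
   one of each, and if these were not adjacent, both neighbours of the sink
   would weigh the label of the sink.  Conversely, give a Theta-oriented cycle
   a labeling with label n on the sink: the sink weighs 0, the source more
   than n, and two other vertices of equal weight would point to a common
   vertex, necessarily the sink, which has only two in-neighbours, one of
   them the source. *)

Section Digraph.
Variables (T : finType) (e : rel T).

Lemma walk_len0 u v : walk_len e u v 0 = (u == v).
Proof.
apply/existsP/eqP => [[p /andP[_ /eqP]]|->]; first by rewrite (tuple0 p).
by exists [tuple]; rewrite /= eqxx.
Qed.

Lemma walk_len1 u v : walk_len e u v 1 = e u v.
Proof.
apply/existsP/idP => [[p]|euv]; last by exists [tuple v]; rewrite /= euv eqxx.
by case: p / tupleP => x t; rewrite (tuple0 t) /= andbT => /andP[? /eqP <-].
Qed.

Lemma dist_eq1 u v : dist_eq e u v 1 = e u v && (u != v).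
Proof.
rewrite /dist_eq walk_len1; congr (_ && _).
apply/forallP/idP => [/(_ ord0)|uv j]; first by rewrite walk_len0.
by rewrite (ord1 j) walk_len0.
Qed.

Lemma ND_pred1 v : 1 < #|T| -> (forall x, ~~ e x x) ->
  ND e (pred1 1) v = [set y | e v y].
Proof.
move=> T_gt1 loopless; apply/setP => y; rewrite !inE.
have -> : e v y = dist_eq e v y 1.
  by rewrite dist_eq1; case: eqP => [<-|_]; rewrite ?andbT ?(negbTE (loopless v)).
apply/existsP/idP => [[k /andP[/eqP <-]]//|d1].
by exists (Ordinal T_gt1); rewrite /= d1.
Qed.

Lemma Dweight_sink f v : is_sink e v -> Dweight e (pred1 1) f v = 0.
Proof.
move=> /forallP sink_v; rewrite /Dweight big_pred0 // => y.
apply/negbTE; rewrite inE; apply/existsP => -[k /andP[/eqP k1 dk]].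
by move: dk; rewrite k1 dist_eq1 (negbTE (sink_v y)).
Qed.

Lemma antimagic_sink_uniq f u v : D_antimagic_labeling e (pred1 1) f ->
  is_sink e u -> is_sink e v -> u = v.
Proof. by move=> [_ winj] su sv; apply: winj; rewrite !Dweight_sink. Qed.

Lemma functional_antimagic_labeling (g : T -> T) f : 1 < #|T| ->
    (forall u v, e u v = (v == g u)) -> injective g -> (forall v, v != g v) ->
  vlabeling f -> D_antimagic_labeling e (pred1 1) f.
Proof.
move=> T_gt1 eE ginj g_fixfree f_lab; split=> // u v.
have wE x : Dweight e (pred1 1) f x = f (g x).
  rewrite /Dweight ND_pred1 // => [|y]; last by rewrite eE.
  rewrite (_ : [set y | _] = [set g x]) ?big_set1 //.
  by apply/setP => y; rewrite !inE eE.
by rewrite !wE => /(proj1 f_lab); apply: ginj.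
Qed.

End Digraph.

Lemma exists_vlabeling_max (T : finType) (b : T) :
  exists2 f : T -> nat, vlabeling f & f b = #|T|.
Proof.
have T_gt0 : 0 < #|T| by apply/card_gt0P; exists b.
have m_lt : #|T|.-1 < #|T| by rewrite ltn_predL.
pose s := tperm (enum_rank b) (Ordinal m_lt).
exists (fun x => (s (enum_rank x)).+1); last by rewrite tpermL /= prednK.
split=> [x y /eqP|x]; last by rewrite ltn_ord.
by rewrite eqSS => /eqP/val_inj/perm_inj/enum_rank_inj.
Qed.

Lemma card1_set_eq (T : finType) (P : pred T) x y :
  #|[set z | P z]| = 1 -> P x -> P y -> x = y.
Proof.
move=> /eqP; rewrite eqn_leq => /andP[/card_le1_eqP P_uniq _] Px Py.
by apply: P_uniq; rewrite inE.
Qed.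

Lemma val_ordS n (x : 'I_n) : val (ordS x) = if x.+1 < n then x.+1 else 0.
Proof.
have /= := ltn_ord x; case: (ltnP x.+1 n) => [/modn_small //|n_le lt_n].
have -> : x.+1 = n by apply/eqP; rewrite eqn_leq n_le lt_n.
by rewrite modnn.
Qed.

Lemma ordS_neq n (x : 'I_n) : 1 < n -> ordS x != x.
Proof.
by move=> n_gt1; rewrite -val_eqE val_ordS /=; have := ltn_ord x; case: ifP; lia.
Qed.

Lemma ord_pred_neq n (x : 'I_n) : 1 < n -> ord_pred x != x.
Proof. by move=> n_gt1; rewrite -(inj_eq (@ordS_inj n)) ord_predK eq_sym ordS_neq. Qed.

Lemma ordSS_neq n (x : 'I_n) : 2 < n -> ordS (ordS x) != x.
Proof.
move=> n_gt2; rewrite -val_eqE !val_ordS /=; have := ltn_ord x.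
by case: (ltnP x.+1 n) => ? /=; case: ifP => ?; lia.
Qed.

Lemma ordS_rev_ordS n (x : 'I_n) : ordS (rev_ord (ordS x)) = rev_ord x.
Proof.
apply: val_inj; rewrite val_ordS; move: (val_ordS x) (ltn_ord x) => /= ->.
by case: (ltnP x.+1 n) => ? /=; case: ifP => ?; lia.
Qed.

Lemma ordS_neq_pred n (x : 'I_n) : 2 < n -> ordS x != ord_pred x.
Proof.
move=> n_gt2; apply: contra (ordSS_neq x n_gt2) => /eqP->.
by rewrite ord_predK.
Qed.

Lemma unidirectional_antimagic n (e : rel 'I_n) : 1 < n ->
  unidirectional e -> D_antimagic e (pred1 1).
Proof.
move=> n_gt1 [s es].
have [f f_lab _] := exists_vlabeling_max (Ordinal (ltnW n_gt1)).
exists f; apply: (@functional_antimagic_labeling _ _ (fun v => s (ordS (s^-1 v)%g))).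
- by rewrite card_ord.
- move=> u v; rewrite -{1}(permKV s u) -{1}(permKV s v) es.
  by rewrite -(inj_eq (@perm_inj _ s^-1%g)) permK.
- by move=> u v /perm_inj/ordS_inj/perm_inj.
- move=> v; rewrite -{1}(permKV s v) (inj_eq (@perm_inj _ s)).
  by rewrite eq_sym ordS_neq.
- exact: f_lab.
Qed.

Section OrientedCycle.
Variables (n : nat) (o : 'I_n -> bool).
Hypothesis n_gt2 : 2 < n.
Local Notation e := (ocycle_arc o).

Lemma ocycle_arcE v y : e v y =
  (y == ordS v) && o v || (y == ord_pred v) && ~~ o (ord_pred v).
Proof.
rewrite /ocycle_arc; congr (_ || _).
rewrite -[(v == _ :> nat)]/(v == ordS y) eq_sym.
rewrite (can2_eq (@ordSK n) (@ord_predK n)).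
by case: eqP => // ->.
Qed.

Lemma ocycle_arcE_in u y : e u y =
  (u == ord_pred y) && o (ord_pred y) || (u == ordS y) && ~~ o y.
Proof.
rewrite /ocycle_arc; congr (_ || _).
rewrite -[(y == _ :> nat)]/(y == ordS u) eq_sym.
rewrite (can2_eq (@ordSK n) (@ord_predK n)).
by case: eqP => // ->.
Qed.

Lemma ocycle_loopless v : ~~ e v v.
Proof.
have n_gt1 := ltnW n_gt2.
rewrite ocycle_arcE !(eq_sym v).
by rewrite (negbTE (ordS_neq v n_gt1)) (negbTE (ord_pred_neq v n_gt1)).
Qed.

Lemma ocycle_out v : [set y | e v y] =
  (if o v then [set ordS v] else set0) :|:
  (if o (ord_pred v) then set0 else [set ord_pred v]).
Proof.
apply/setP => y; rewrite inE ocycle_arcE.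
by case: (o v); case: (o (ord_pred v)); rewrite /= !inE ?andbT ?andbF ?orbF.
Qed.

Lemma Dweight_ocycle f v : Dweight e (pred1 1) f v =
  (if o v then f (ordS v) else 0) + (if o (ord_pred v) then 0 else f (ord_pred v)).
Proof.
rewrite /Dweight ND_pred1 ?card_ord 1?ltnW //; last exact: ocycle_loopless.
rewrite ocycle_out.
case: (o v); case: (o (ord_pred v));
  rewrite /= ?setU0 ?set0U ?big_set0 ?big_set1 ?addn0 //.
by rewrite big_setU1 ?big_set1 // inE ordS_neq_pred.
Qed.

Lemma ocycle_sourceE v : is_source e v = o v && ~~ o (ord_pred v).
Proof.
apply/forallP/andP => [no_in|[ov npv] u]; last first.
  by rewrite ocycle_arcE_in ov (negbTE npv) !andbF.
move: (no_in (ord_pred v)) (no_in (ordS v)).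
rewrite !ocycle_arcE_in !eqxx eq_sym (negbTE (ordS_neq_pred v n_gt2)) /=.
by case: (o v); case: (o (ord_pred v)).
Qed.

Lemma ocycle_sinkE v : is_sink e v = ~~ o v && o (ord_pred v).
Proof.
apply/forallP/andP => [no_out|[nov pv] u]; last first.
  by rewrite ocycle_arcE (negbTE nov) pv !andbF.
move: (no_out (ord_pred v)) (no_out (ordS v)).
rewrite !ocycle_arcE !eqxx eq_sym (negbTE (ordS_neq_pred v n_gt2)) /=.
by case: (o v); case: (o (ord_pred v)).
Qed.

(* Sum [o v + sink v = o (ord_pred v) + source v] around the cycle. *)
Lemma card_ocycle_sources :
  #|[set v | is_source e v]| = #|[set v | is_sink e v]|.
Proof.
have card_sum (P : pred 'I_n) : #|[set v | P v]| = \sum_v P v.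
  by rewrite -sum1dep_card big_mkcond; apply: eq_bigr => v _; case: (P v).
apply: (@addIn (\sum_v o v)).
rewrite {1}(reindex_inj (can_inj (@ord_predK n))) !card_sum -!big_split /=.
apply: eq_bigr => v _; rewrite ocycle_sourceE ocycle_sinkE.
by case: (o v); case: (o (ord_pred v)).
Qed.

Definition ocycle_next v := if o v then ordS v else ord_pred v.

Lemma Dweight_ocycle_next f v : ~~ is_source e v -> ~~ is_sink e v ->
  Dweight e (pred1 1) f v = f (ocycle_next v).
Proof.
rewrite ocycle_sourceE ocycle_sinkE Dweight_ocycle /ocycle_next.
by case: (o v); case: (o (ord_pred v)); rewrite ?addn0.
Qed.

Lemma ocycle_arc_next v : ~~ is_sink e v -> e v (ocycle_next v).
Proof.
rewrite ocycle_sinkE ocycle_arcE /ocycle_next.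
by case: (o v); case: (o (ord_pred v)); rewrite ?eqxx //= orbT.
Qed.

Lemma ocycle_in_neighbour u y : e u y -> (u == ord_pred y) || (u == ordS y).
Proof. by rewrite ocycle_arcE_in => /orP[]/andP[-> _]; rewrite ?orbT. Qed.

Lemma ocycle_sink_of_in2 u v y : e u y -> e v y -> u != v -> is_sink e y.
Proof.
rewrite !ocycle_arcE_in ocycle_sinkE.
move=> /orP[]/andP[/eqP-> ?] /orP[]/andP[/eqP-> ?]; rewrite ?eqxx //= => _.
all: exact/andP.
Qed.

Lemma ocycle_in3 u v x y :
  e u y -> e v y -> e x y -> [|| u == v, u == x | v == x].
Proof.
by do 3 move=> /ocycle_in_neighbour/orP[]/eqP->; rewrite ?eqxx ?orbT.
Qed.

Lemma ocycle_orientation_const :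
  (forall v, o (ord_pred v) = o v) -> forall u v, o u = o v.
Proof.
move=> o_pred; have n_gt0 : 0 < n by rewrite ltnW // ltnW.
suff o_const v : o v = o (Ordinal n_gt0) by move=> u v; rewrite !o_const.
case: v => k; elim: k => [|k IH] k_lt; first by congr o; apply: val_inj.
have -> : Ordinal k_lt = ordS (Ordinal (ltnW k_lt)).
  by apply: val_inj; rewrite /= modn_small.
by rewrite -o_pred ordSK IH.
Qed.

Lemma ocycle_unidirectional_ordS : (forall v, o v) -> unidirectional e.
Proof.
by move=> oT; exists 1%g => i j; rewrite !perm1 /ocycle_arc !oT andbT andbF orbF.
Qed.

Lemma ocycle_unidirectional_ord_pred : (forall v, ~~ o v) -> unidirectional e.
Proof.
move=> oF; exists (perm (@rev_ord_inj n)) => i j; rewrite !permE ocycle_arcE_in.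
rewrite (negbTE (oF _)) oF andbF andbT -{1}(ordS_rev_ordS i).
by rewrite (inj_eq (@ordS_inj n)) (inj_eq (@rev_ord_inj n)) eq_sym.
Qed.

Lemma theta_ocycle_antimagic : theta_oriented e -> D_antimagic e (pred1 1).
Proof.
move=> [src1 [snk1 [a [b [sa sb eab]]]]].
have {}eab : e a b by case/orP: eab => // eba; move/forallP: sb => /(_ a); rewrite eba.
have [f f_lab fb] := exists_vlabeling_max b.
exists f; split=> //; case: f_lab => finj f_rng; rewrite card_ord in f_rng fb.
pose w := Dweight e (pred1 1) f.
have mid v : v != a -> v != b -> w v = f (ocycle_next v) /\ e v (ocycle_next v).
  move=> va vb.
  have ns : ~~ is_source e v.
    by apply: contra va => sv; rewrite (card1_set_eq src1 sv sa).
  have nk : ~~ is_sink e v.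
    by apply: contra vb => kv; rewrite (card1_set_eq snk1 kv sb).
  by split; [apply: Dweight_ocycle_next | apply: ocycle_arc_next].
have w_eq0 v : (w v == 0) = (v == b).
  have [->|vb] := eqVneq v b; first exact/eqP/Dweight_sink.
  apply/negbTE; have [->|va] := eqVneq v a.
    move: sa; rewrite /w Dweight_ocycle ocycle_sourceE => /andP[-> _].
    by have := f_rng (ordS a); lia.
  by have [-> _] := mid v va vb; have := f_rng (ocycle_next v); lia.
have w_gtn v : (n < w v) = (v == a).
  have [->|va] := eqVneq v a.
    move: sa eab; rewrite /w Dweight_ocycle ocycle_sourceE ocycle_arcE.
    move=> /andP[-> /negbTE ->] /=.
    case/orP => /andP[/eqP <- _]; rewrite fb;
      [have := f_rng (ord_pred a) | have := f_rng (ordS a)]; lia.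
  apply/negbTE; have [->|vb] := eqVneq v b; first by rewrite /w Dweight_sink.
  by have [-> _] := mid v va vb; have := f_rng (ocycle_next v); lia.
move=> u v; rewrite -/(w u) -/(w v) => wuv.
have eq_b : (u == b) = (v == b) by rewrite -!w_eq0 wuv.
have eq_a : (u == a) = (v == a) by rewrite -!w_gtn wuv.
have [ub|ub] := boolP (u == b).
  by rewrite (eqP ub); move: ub; rewrite eq_b => /eqP->.
have [ua|ua] := boolP (u == a).
  by rewrite (eqP ua); move: ua; rewrite eq_a => /eqP->.
have vb : v != b by rewrite -eq_b.
have va : v != a by rewrite -eq_a.
have [wu eu] := mid u ua ub; have [wv ev] := mid v va vb.
move: wuv; rewrite wu wv => /finj next_eq; rewrite -next_eq in ev.
apply/eqP; apply: contraT => uv.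
have next_b := card1_set_eq snk1 (ocycle_sink_of_in2 eu ev uv) sb.
rewrite next_b in eu ev.
by have := ocycle_in3 eu ev eab; rewrite (negbTE uv) (negbTE ua) (negbTE va).
Qed.

Lemma antimagic_ocycle :
  D_antimagic e (pred1 1) -> unidirectional e \/ theta_oriented e.
Proof.
move=> [f f_am]; have sink_uniq u v := @antimagic_sink_uniq _ _ f u v f_am.
have [t st|no_sink] := pickP (is_sink e); last first.
  have no_source v : ~~ is_source e v.
    have : #|[set v | is_source e v]| = 0.
      by rewrite card_ocycle_sources; apply: eq_card0 => x; rewrite inE no_sink.
    by move/card0_eq/(_ v); rewrite inE => ->.
  have o_pred v : o (ord_pred v) = o v.
    move: (no_source v) (no_sink v); rewrite ocycle_sourceE ocycle_sinkE.
    by case: (o v); case: (o (ord_pred v)).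
  pose v0 : 'I_n := Ordinal (ltnW (ltnW n_gt2)).
  have o_const v : o v = o v0 := ocycle_orientation_const o_pred v v0.
  left; case o_v0 : (o v0).
    by apply: ocycle_unidirectional_ordS => v; rewrite o_const o_v0.
  by apply: ocycle_unidirectional_ord_pred => v; rewrite o_const o_v0.
right.
have snk1 : #|[set v | is_sink e v]| = 1.
  rewrite -(cards1 t); apply: eq_card => v; rewrite !inE.
  by apply/idP/eqP => [sv|->]; first exact: sink_uniq sv st.
have [a sa eat] : exists2 a, is_source e a & e a t.
  move: (st); rewrite ocycle_sinkE => /andP[not opt].
  have [sS|nsS] := boolP (is_source e (ordS t)).
    by exists (ordS t); rewrite // ocycle_arcE_in eqxx not orbT.
  have [sP|nsP] := boolP (is_source e (ord_pred t)).
    by exists (ord_pred t); rewrite // ocycle_arcE_in eqxx opt.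
  have not_sink v : v != t -> ~~ is_sink e v.
    by apply: contra => /sink_uniq/(_ st)/eqP.
  suff : ordS t = ord_pred t.
    by move/eqP; rewrite (negbTE (ordS_neq_pred t n_gt2)).
  apply: (proj2 f_am).
  rewrite !Dweight_ocycle_next ?not_sink ?ordS_neq ?ord_pred_neq 1?ltnW //.
  move: nsS; rewrite ocycle_sourceE ordSK not andbT /ocycle_next => /negbTE->.
  by rewrite opt ordSK ord_predK.
have src1 : #|[set v | is_source e v]| = 1 by rewrite card_ocycle_sources.
by split=> //; split=> //; exists a, t; rewrite st eat.
Qed.

End OrientedCycle.

Theorem mainTheorem4 (n : nat) (o : 'I_n -> bool) : 3 <= n ->
  (D_antimagic (ocycle_arc o) (pred1 1%N) <->
   unidirectional (ocycle_arc o) \/ theta_oriented (ocycle_arc o)).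
Proof.
move=> n_gt2; split; first exact: antimagic_ocycle.
case; first exact: unidirectional_antimagic (ltnW n_gt2).
exact: theta_ocycle_antimagic.
Qed.
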